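(* For every $k\ge0$, the restriction $f_k$ of $f$ to $\mathcal{P}_k$ is an order isomorphism from $\mathcal{P}_k$ (with pattern containment order) onto $\widehat{\mathcal{A}}_{k+1}$ (with subword order): it is a bijection, and for $\sigma,\pi\in\mathcal{P}_k$ we have $\sigma\le\pi$ if and only if $f(\sigma)\le f(\pi)$.
   Context: A permutation of length $n\ge1$ is a word $\pi=\pi_1\cdots\pi_n$ containing each of $1,\dots,n$ exactly once. $\sigma\le\pi$ (pattern containment) if $\pi$ has a subsequence whose letters are in the same relative order as the letters of $\sigma$. A descent of $\pi$ is an index $i$ with $\pi_i>\pi_{i+1}$; $\mathcal{P}_k$ is the set of permutations with exactly $k$ descents, with the induced order. For a letter $c$ of $\pi$, $d_\pi(c)$ is $1$ plus the number of descents at indices before the position of $c$. Words are finite sequences of positive integers with subword order: $v\le w$ if $v$ equals some (not necessarily consecutive) subsequence of $w$. $\max(w)$ is the largest letter of $w$. $\widehat{\mathcal{A}}_k$ is the set of words $w$ with $\max(w)=k$ such that (AC1) each $i\in\{1,\dots,k\}$ occurs in $w$, and (AC2) for each $i\in\{1,\dots,k-1\}$ the rightmost occurrence of $i$ is preceded by an occurrence of $i+1$, with subword order. $f(\pi)=d_\pi(1)d_\pi(2)\cdots d_\pi(n)$. *)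

From mathcomp Require Import all_boot.
Set Implicit Arguments. Unset Strict Implicit. Unset Printing Implicit Defensive.

Definition is_perm (p : seq nat) : bool :=
  (0 < size p) && perm_eq p (iota 1 (size p)).

Definition contains (pi sigma : seq nat) : Prop :=
  exists s : seq nat,
    [/\ subseq s pi, size s = size sigma &
        forall i j, i < size sigma -> j < size sigma ->
          (nth 0 sigma i < nth 0 sigma j) = (nth 0 s i < nth 0 s j)].

Definition pat_le (sigma pi : seq nat) : Prop := contains pi sigma.

Definition is_descent (p : seq nat) (i : nat) : bool :=
  (i.+1 < size p) && (nth 0 p i > nth 0 p i.+1).

Definition des (p : seq nat) : nat := count (is_descent p) (iota 0 (size p)).

Definition dval (p : seq nat) (c : nat) : nat :=
  1 + count (is_descent p) (iota 0 (index c p)).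

Definition fmap (p : seq nat) : seq nat := map (dval p) (iota 1 (size p)).

Definition maxw (w : seq nat) : nat := \max_(x <- w) x.

(* 0-based position of the rightmost occurrence of x in w (assuming x \in w) *)
Definition last_pos (x : nat) (w : seq nat) : nat := (size w).-1 - index x (rev w).

Definition inAhat (k : nat) (w : seq nat) : bool :=
  [&& all (fun x => 0 < x) w,
      maxw w == k,
      all (fun i => i \in w) (iota 1 k) &
      all (fun i => i.+1 \in take (last_pos i w) w) (iota 1 k.-1) ].

From mathcomp Require Import all_boot zify.
Set Implicit Arguments. Unset Strict Implicit. Unset Printing Implicit Defensive.

(* A permutation with k descents splits into k+1 increasing runs, and f(pi) records for each
   letter the run containing it; hence pi lists its letters sorted by (run, letter).  So pi is
   recovered from f(pi), and a word w of Ahat_(k+1) comes from the permutation listing 1..n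
   sorted by (w_c, c): AC1 makes all k+1 runs nonempty and AC2 forces a descent between
   consecutive runs.  An occurrence of sigma in pi meets the runs of pi weakly increasingly and
   must change run at each descent of sigma; when des sigma = des pi this pins the runs down, so
   f(sigma) is the subword of f(pi) at the letters of the occurrence.  Conversely, the letters
   selected by a subword of f(pi), taken in (run, letter) order, form an occurrence of sigma. *)

Definition desc_before (p : seq nat) (i : nat) : nat := count (is_descent p) (iota 0 i).

Lemma desc_beforeS p i : desc_before p i.+1 = desc_before p i + is_descent p i.
Proof. by rewrite /desc_before -addn1 iotaD count_cat /= addn0. Qed.

Lemma leq_desc_before p : {homo desc_before p : i j / i <= j}.
Proof. by move=> i j /subnKC <-; rewrite /desc_before iotaD count_cat leq_addr. Qed.

Lemma desc_before_step p i : desc_before p i <= desc_before p i.+1 <= (desc_before p i).+1.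
Proof. by rewrite desc_beforeS; case: is_descent; rewrite ?addn0 ?addn1 leqnn ?leqnSn. Qed.

Lemma desE p : des p = desc_before p (size p).
Proof. by []. Qed.

Lemma desc_before_last p : 0 < size p -> desc_before p (size p).-1 = des p.
Proof.
move=> p_gt0; rewrite desE -{2}(prednK p_gt0) desc_beforeS.
by rewrite /is_descent prednK // ltnn addn0.
Qed.

Lemma dvalE p c : dval p c = (desc_before p (index c p)).+1.
Proof. by rewrite /dval add1n. Qed.

Section UnitSteps.

Variable f : nat -> nat.
Hypotheses (f0 : f 0 = 0) (f_step : forall t, f t <= f t.+1 <= (f t).+1).

Lemma unit_steps_cross N v : v < f N -> exists t, [/\ t < N, f t = v & f t.+1 = v.+1].
Proof.
elim: N => [|N IHN]; first by rewrite f0.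
case: (ltnP v (f N)) => [/IHN [t [tN ftv ftSv]] _|le_v_fN lt_v_fSN].
  by exists t; split=> //; apply: ltnW.
by exists N; have := f_step N; split=> //; lia.
Qed.

Lemma unit_steps_hit N v : v <= f N -> exists2 t, t <= N & f t = v.
Proof.
rewrite leq_eqVlt => /orP[/eqP ->|/unit_steps_cross [t [tN ftv _]]]; first by exists N.
by exists t; first exact: ltnW.
Qed.

End UnitSteps.

Lemma sorted_index_ltnE (T : eqType) (r : rel T) s :
  transitive r -> irreflexive r -> sorted r s ->
  {in s &, forall x y, r x y = (index x s < index y s)}.
Proof.
move=> r_tr r_irr s_sorted x y xs ys; apply/idP/idP; last exact: sorted_ltn_index.
case: ltngtP => // [/(sorted_ltn_index r_tr s_sorted y x ys xs) ryx rxy|].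
  by have := r_tr _ _ _ rxy ryx; rewrite r_irr.
by move=> /(congr1 (nth x s)); rewrite !nth_index // => ->; rewrite r_irr.
Qed.

Lemma subseq_index_ltn (T : eqType) (x0 : T) (t p : seq T) i j :
  uniq p -> subseq t p -> i < j -> j < size t ->
  index (nth x0 t i) p < index (nth x0 t j) p.
Proof.
move=> p_uniq tp ij jt.
pose r := [rel a b | index a p < index b p].
have r_tr : transitive r by move=> b a c /= /ltn_trans; apply.
have p_sorted : sorted r p.
  by apply/(sortedP x0) => l lp; rewrite /= !index_uniq // ltnW.
apply: (sorted_ltn_nth r_tr x0 (subseq_sorted r_tr tp p_sorted)) => //.
by rewrite inE (ltn_trans ij).
Qed.

Definition lex_by (d : nat -> nat) (r : rel nat) : rel nat :=
  fun a b => (d a < d b) || ((d a == d b) && r a b).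

Lemma lex_by_trans d r : transitive r -> transitive (lex_by d r).
Proof.
move=> r_tr b a c; rewrite /lex_by.
case/orP=> [ab|/andP[/eqP-> rab]]; case/orP=> [bc|/andP[/eqP<- rbc]].
- by rewrite (ltn_trans ab bc).
- by rewrite ab.
- by rewrite bc.
- by rewrite eqxx (r_tr _ _ _ rab rbc) orbT.
Qed.

Lemma lex_by_irr d : irreflexive (lex_by d ltn).
Proof. by move=> a; rewrite /lex_by /= !ltnn andbF. Qed.

Lemma lex_by_total d : total (lex_by d leq).
Proof. by move=> a b; rewrite /lex_by; case: ltngtP => //= _; rewrite leq_total. Qed.

Lemma lex_by_ltnE d a b : lex_by d ltn a b = (a != b) && lex_by d leq a b.
Proof.
rewrite /lex_by /=; case: (eqVneq a b) => [->|ne_ab]; first by rewrite !ltnn andbF eqxx.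
by rewrite [a < b]ltn_neqAle ne_ab.
Qed.

Lemma sorted_lex_by_ltn d s :
  uniq s -> sorted (lex_by d leq) s -> sorted (lex_by d ltn) s.
Proof.
move=> s_uniq /(sortedP 0) s_sorted; apply/(sortedP 0) => i lt_i1_s.
by rewrite lex_by_ltnE s_sorted // andbT nth_uniq ?ltn_eqF // ltnW.
Qed.

Lemma leq_maxw w x : x \in w -> x <= maxw w.
Proof. by move=> xw; apply: leq_bigmax_seq. Qed.

Lemma maxw_eq w m : m \in w -> (forall x, x \in w -> x <= m) -> maxw w = m.
Proof.
move=> mw le_w_m; apply/eqP; rewrite eqn_leq leq_maxw // andbT.
by apply/bigmax_leqP_seq => x xw _; apply: le_w_m.
Qed.

Lemma leq_last_pos w j : j < size w -> j <= last_pos (nth 0 w j) w.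
Proof.
move=> jw; rewrite /last_pos.
suff : index (nth 0 w j) (rev w) <= size w - j.+1 by lia.
rewrite leqNgt; apply/negP => /(before_find 0).
rewrite nth_rev; last by lia.
by rewrite (_ : size w - (size w - j.+1).+1 = j) /= ?eqxx //; lia.
Qed.

Lemma nth_last_pos w x : x \in w -> last_pos x w < size w /\ nth 0 w (last_pos x w) = x.
Proof.
rewrite -mem_rev => xw; have := xw; rewrite -index_mem size_rev => ix.
(* [set n] identifies the two elaborations of [size w] (at [nat] and at its eqType) for [lia]. *)
rewrite /last_pos; set n := size w; set i := index _ _ in ix *.
split; first by lia.
have := nth_index 0 xw; rewrite nth_rev // -/i => <-; congr nth; lia.
Qed.

Lemma is_perm_uniq p : is_perm p -> uniq p.
Proof. by case/andP=> _ /perm_uniq ->; apply: iota_uniq. Qed.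

Lemma mem_is_perm p c : is_perm p -> (c \in p) = (0 < c <= size p).
Proof. by case/andP=> _ /perm_mem ->; rewrite mem_iota add1n ltnS. Qed.

Lemma nth_is_perm p t : is_perm p -> t < size p -> 0 < nth 0 p t <= size p.
Proof. by move=> pp tp; rewrite -mem_is_perm ?mem_nth. Qed.

Lemma size_fmap p : size (fmap p) = size p.
Proof. by rewrite size_map size_iota. Qed.

Definition letter (w : seq nat) (c : nat) : nat := nth 0 w c.-1.

Lemma letter_fmap p c : 0 < c <= size p -> letter (fmap p) c = dval p c.
Proof.
by case/andP=> c_gt0 cp; rewrite /letter (nth_map 0) ?nth_iota ?size_iota ?add1n ?prednK.
Qed.

Lemma dval_nth p t : is_perm p -> t < size p -> dval p (nth 0 p t) = (desc_before p t).+1.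
Proof. by move=> pp tp; rewrite dvalE index_uniq // is_perm_uniq. Qed.

Lemma sorted_lex_dval p : is_perm p -> sorted (lex_by (dval p) ltn) p.
Proof.
move=> pp; apply/(sortedP 0) => i lt_i1_p; have ip := ltnW lt_i1_p.
rewrite /lex_by /= !dval_nth // desc_beforeS ltnS eqSS.
case: (boolP (is_descent p i)) => [_|]; first by rewrite addn1 ltnSn.
rewrite /is_descent lt_i1_p /= -leqNgt addn0 ltnn eqxx /= ltn_neqAle => ->.
by rewrite nth_uniq ?is_perm_uniq // ltn_eqF.
Qed.

Lemma fmap_range p x : x \in fmap p -> 0 < x <= (des p).+1.
Proof.
by case/mapP=> c _ ->; rewrite dvalE ltnS desE; apply/leq_desc_before/index_size.
Qed.

Lemma mem_fmap_desc_before p t :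
  is_perm p -> t < size p -> (desc_before p t).+1 \in fmap p.
Proof.
move=> pp tp; have /andP[a_gt0 ap] := nth_is_perm pp tp.
rewrite -dval_nth // -letter_fmap ?a_gt0 //; apply: mem_nth.
by rewrite size_fmap prednK.
Qed.

Lemma fmap_ac2 p i :
  is_perm p -> 0 < i <= des p -> i.+1 \in take (last_pos i (fmap p)) (fmap p).
Proof.
move=> pp /andP[i_gt0 le_i_des]; have p_gt0 : 0 < size p by case/andP: pp.
have [t [tp dt dtS]] : exists t,
    [/\ t < (size p).-1, desc_before p t = i.-1 & desc_before p t.+1 = i.-1.+1].
  by apply: unit_steps_cross => //; [exact: desc_before_step | rewrite desc_before_last; lia].
have tSp : t.+1 < size p by lia.
have : is_descent p t by move: dtS; rewrite desc_beforeS dt; case: is_descent => //=; lia.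
rewrite /is_descent tSp /= => b_lt_a.
set a := nth 0 p t in b_lt_a; set b := nth 0 p t.+1 in b_lt_a.
have /andP[a_gt0 ap] := nth_is_perm pp (ltnW tSp).
have /andP[b_gt0 bp] := nth_is_perm pp tSp.
have la : nth 0 (fmap p) a.-1 = i.
  by rewrite -[nth _ _ _]/(letter _ a) letter_fmap ?a_gt0 // dval_nth ?dt ?prednK // ltnW.
have lb : nth 0 (fmap p) b.-1 = i.+1.
  by rewrite -[nth _ _ _]/(letter _ b) letter_fmap ?b_gt0 // dval_nth ?dtS ?prednK.
have a_last : a.-1 <= last_pos i (fmap p).
  by rewrite -la leq_last_pos // size_fmap; lia.
have [lp_size _] := nth_last_pos (mem_fmap_desc_before pp (ltnW tSp)).
rewrite dt prednK // in lp_size.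
rewrite -lb -(nth_take _ (n0 := last_pos i (fmap p))); last by lia.
by apply: mem_nth; rewrite size_takel; lia.
Qed.

Lemma fmap_inAhat p : is_perm p -> inAhat (des p).+1 (fmap p).
Proof.
move=> pp; have p_gt0 : 0 < size p by case/andP: pp.
have hit v : 0 < v <= (des p).+1 -> v \in fmap p.
  move=> /andP[v_gt0 v_le].
  have [|t tp dt] :=
    @unit_steps_hit (desc_before p) (erefl 0) (@desc_before_step p) (size p).-1 v.-1.
    by rewrite desc_before_last; lia.
  have -> : v = (desc_before p t).+1 by lia.
  by apply: mem_fmap_desc_before => //; lia.
apply/and4P; split.
- by apply/allP => x /fmap_range /andP[].
- apply/eqP/maxw_eq => [|x /fmap_range /andP[] //]; exact/hit/leqnn.
- by apply/allP => v; rewrite mem_iota add1n ltnS => /hit.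
- by apply/allP => i; rewrite mem_iota => i_range; apply: fmap_ac2; lia.
Qed.

Lemma fmap_inj s p : is_perm s -> is_perm p -> fmap s = fmap p -> s = p.
Proof.
move=> ps pp eq_f; have eq_size : size s = size p by rewrite -size_fmap eq_f size_fmap.
have eq_lex : {in s &, lex_by (dval s) ltn =2 lex_by (dval p) ltn}.
  suff eq_d c : c \in s -> dval s c = dval p c by move=> x y xs ys; rewrite /lex_by !eq_d.
  by rewrite mem_is_perm // => c_range; rewrite -letter_fmap // eq_f letter_fmap -?eq_size.
apply: (irr_sorted_eq (lex_by_trans ltn_trans) (@lex_by_irr (dval p))).
- by rewrite -(eq_in_sorted eq_lex (allss s)) sorted_lex_dval.
- exact: sorted_lex_dval.
- by move=> c; rewrite !mem_is_perm ?eq_size.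
Qed.

Definition perm_of_word (w : seq nat) : seq nat :=
  sort (lex_by (letter w) leq) (iota 1 (size w)).

Section PermOfWord.

Variable w : seq nat.
Local Notation p := (perm_of_word w).

Lemma size_perm_of_word : size p = size w.
Proof. by rewrite size_sort size_iota. Qed.

Lemma mem_perm_of_word c : (c \in p) = (0 < c <= size w).
Proof. by rewrite mem_sort mem_iota add1n ltnS. Qed.

Lemma uniq_perm_of_word : uniq p.
Proof. by rewrite sort_uniq iota_uniq. Qed.

Lemma nth_perm_of_word j : j < size w -> nth 0 p j \in p.
Proof. by move=> jw; rewrite mem_nth ?size_perm_of_word. Qed.

Lemma index_perm_of_word j : j < size w -> index (nth 0 p j) p = j.
Proof. by move=> jw; rewrite index_uniq ?size_perm_of_word ?uniq_perm_of_word. Qed.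

Lemma perm_of_word_ltnE :
  {in p &, forall x y, lex_by (letter w) ltn x y = (index x p < index y p)}.
Proof.
apply: sorted_index_ltnE (lex_by_trans ltn_trans) (@lex_by_irr _) _.
exact/sorted_lex_by_ltn/sort_sorted/lex_by_total/uniq_perm_of_word.
Qed.

Lemma letter_perm_of_word_le x y : x \in p -> y \in p ->
  index x p <= index y p -> letter w x <= letter w y.
Proof.
have le_tr : transitive (relpre (letter w) leq) by move=> ? ? ? /= /leq_trans; apply.
apply: (sorted_leq_index le_tr (fun x => leqnn _)).
apply: sub_sorted (sort_sorted (@lex_by_total _) _) => a b.
by rewrite /lex_by /= => /orP[/ltnW|/andP[/eqP-> _]].
Qed.

Variable k : nat.
Hypothesis w_in : inAhat k.+1 w.

Lemma letter_range c : 0 < c <= size w -> 0 < letter w c <= k.+1.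
Proof.
case/andP=> c_gt0 cw; have cw' : letter w c \in w by rewrite mem_nth ?prednK.
by case/and4P: w_in => /allP w_pos /eqP <- _ _; rewrite w_pos //= leq_maxw.
Qed.

Lemma letter_hit v : 0 < v <= k.+1 -> exists2 c, 0 < c <= size w & letter w c = v.
Proof.
case/and4P: w_in => _ _ /allP ac1 _ v_range.
have vw : v \in w by apply: ac1; rewrite mem_iota add1n ltnS.
by exists (index v w).+1; rewrite /= ?index_mem // /letter nth_index.
Qed.

Lemma letter_ac2 v : 0 < v <= k -> exists c1 c2,
  [/\ c1 < c2, 0 < c1, c2 <= size w, letter w c1 = v.+1 & letter w c2 = v].
Proof.
case/and4P: w_in => _ _ /allP ac1 /allP ac2 v_range.
have [lp_size lp_v] : last_pos v w < size w /\ nth 0 w (last_pos v w) = v.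
  by apply/nth_last_pos/ac1; rewrite mem_iota; lia.
have := ac2 v; rewrite mem_iota /= add1n ltnS => /(_ v_range).
set L := last_pos v w in lp_size lp_v *.
have L_le_w : L <= size w := ltnW lp_size.
rewrite -index_mem size_takel // => jL.
exists (index v.+1 (take L w)).+1, L.+1; split=> //.
by rewrite /letter /= -(nth_take _ jL) nth_index // -index_mem size_takel.
Qed.

Lemma size_word_gt0 : 0 < size w.
Proof. by have [c /andP[c_gt0 cw] _] := @letter_hit 1 isT; apply: leq_trans cw. Qed.

Lemma is_perm_perm_of_word : is_perm p.
Proof. by rewrite /is_perm size_perm_of_word size_word_gt0 perm_sort perm_refl. Qed.

Lemma letter_perm_of_word0 : letter w (nth 0 p 0) = 1.
Proof.
have p0 := nth_perm_of_word size_word_gt0.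
have [c c_range lc] := @letter_hit 1 isT.
have cp : c \in p by rewrite mem_perm_of_word.
have := letter_perm_of_word_le p0 cp; rewrite lc index_perm_of_word ?size_word_gt0 //.
by move: p0; rewrite mem_perm_of_word => /letter_range; lia.
Qed.

Lemma letter_perm_of_word_last : letter w (nth 0 p (size w).-1) = k.+1.
Proof.
have lastw : (size w).-1 < size w by rewrite prednK ?size_word_gt0.
have pl := nth_perm_of_word lastw.
have [c c_range lc] := @letter_hit k.+1 (leqnn _).
have cp : c \in p by rewrite mem_perm_of_word.
have := letter_perm_of_word_le cp pl; rewrite lc index_perm_of_word //.
have : index c p <= (size w).-1.
  by rewrite -ltnS prednK ?size_word_gt0 // -size_perm_of_word index_mem.
by move: pl; rewrite mem_perm_of_word => /letter_range; lia.
Qed.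

Lemma letter_perm_of_wordS i : i.+1 < size w ->
  letter w (nth 0 p i.+1) = letter w (nth 0 p i) + is_descent p i.
Proof.
move=> iSw; have iw := ltnW iSw.
set a := nth 0 p i; set b := nth 0 p i.+1.
have ap : a \in p := nth_perm_of_word iw.
have bp : b \in p := nth_perm_of_word iSw.
have between c : c \in p ->
    lex_by (letter w) ltn a c -> lex_by (letter w) ltn c b -> False.
  by move=> cp; rewrite !perm_of_word_ltnE // !index_perm_of_word //; lia.
have : lex_by (letter w) ltn a b by rewrite perm_of_word_ltnE ?index_perm_of_word.
rewrite /is_descent size_perm_of_word iSw /= -/a -/b.
case/orP=> [lt_ab|/andP[/eqP-> a_lt_b]]; last by rewrite ltnNge (ltnW a_lt_b) addn0.
have := ap; have := bp; rewrite !mem_perm_of_word => b_range a_range.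
have /letter_range lb_range := b_range; have /letter_range la_range := a_range.
set v := letter w a in lt_ab la_range *.
have lb : letter w b = v.+1.
  apply/eqP; rewrite eqn_leq lt_ab andbT leqNgt; apply/negP => gap.
  have [|c c_range lc] := @letter_hit v.+1; first by lia.
  apply: (between c); first by rewrite mem_perm_of_word.
  - by rewrite /lex_by /= lc ltnSn.
  - by rewrite /lex_by /= lc gap.
(* [b] is the smallest letter valued [v.+1] and [a] the largest valued [v]; AC2 separates them. *)
have [|c1 [c2 [c12 c1_gt0 c2w lc1 lc2]]] := @letter_ac2 v; first by lia.
have c2_le_a : c2 <= a.
  rewrite leqNgt; apply/negP => a_lt_c2.
  apply: (between c2); first by rewrite mem_perm_of_word; lia.
  - by rewrite /lex_by /= lc2 eqxx a_lt_c2 orbT.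
  - by rewrite /lex_by /= lc2 lb ltnSn.
have b_le_c1 : b <= c1.
  rewrite leqNgt; apply/negP => c1_lt_b.
  apply: (between c1); first by rewrite mem_perm_of_word; lia.
  - by rewrite /lex_by /= lc1 ltnSn.
  - by rewrite /lex_by /= lc1 lb eqxx c1_lt_b orbT.
by rewrite lb (_ : b < a) ?addn1 //; lia.
Qed.

Lemma letter_perm_of_word i : i < size w -> letter w (nth 0 p i) = (desc_before p i).+1.
Proof.
elim: i => [_|i IHi iSw]; first exact: letter_perm_of_word0.
by rewrite letter_perm_of_wordS // IHi ?(ltnW iSw) // desc_beforeS addSn.
Qed.

Lemma des_perm_of_word : des p = k.
Proof.
have lastw : (size w).-1 < size w by rewrite prednK ?size_word_gt0.
rewrite -desc_before_last size_perm_of_word ?size_word_gt0 //.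
by apply/eqP; rewrite -eqSS -letter_perm_of_word // letter_perm_of_word_last.
Qed.

Lemma fmap_perm_of_word : fmap p = w.
Proof.
apply: (@eq_from_nth _ 0); rewrite size_fmap size_perm_of_word // => j jw.
have jp : j.+1 \in p by rewrite mem_perm_of_word.
rewrite -[nth 0 (fmap p) j]/(letter (fmap p) j.+1) letter_fmap ?size_perm_of_word //.
rewrite dvalE -letter_perm_of_word ?nth_index //.
by rewrite -size_perm_of_word index_mem.
Qed.

End PermOfWord.

Lemma map_letter_iota L : map (letter L) (iota 1 (size L)) = L.
Proof.
by rewrite (iotaDl 1 0) -map_comp -[RHS](mkseq_nth 0); apply: eq_map.
Qed.

Lemma fmap_eq_map_letter s p L : size L = size s ->
  fmap s = map (dval p) L <-> {in iota 1 (size s), dval s =1 dval p \o letter L}.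
Proof.
move=> sL; rewrite /fmap -{1}(map_letter_iota L) sL -map_comp.
by split=> /eq_in_map.
Qed.

Lemma letter_ltnE L x y : sorted ltn L -> 0 < x <= size L -> 0 < y <= size L ->
  (letter L x < letter L y) = (x < y).
Proof.
move=> L_sorted x_range y_range.
have mono a b : 0 < a <= size L -> 0 < b <= size L -> a < b -> letter L a < letter L b.
  move=> a_range b_range ab.
  by apply: (sorted_ltn_nth ltn_trans 0 L_sorted); rewrite ?inE; lia.
case: (ltngtP x y) => [|yx|->]; [exact: mono | | exact: ltnn].
by apply/negbTE; rewrite -leqNgt ltnW // mono.
Qed.

Lemma squeeze_increments (R Q : nat -> nat) m :
  Q 0 <= R 0 -> R m.-1 <= Q m.-1 ->
  (forall j, j.+1 < m -> R j + Q j.+1 <= R j.+1 + Q j) ->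
  forall i, i < m -> R i = Q i.
Proof.
move=> le0 le_last incr.
have chain i j : i <= j -> j < m -> R i + Q j <= R j + Q i.
  elim: j => [|j IHj]; first by rewrite leqn0 => /eqP->.
  rewrite leq_eqVlt => /orP[/eqP-> //|ij] jm.
  by have := IHj ij (ltnW jm); have := incr j jm; lia.
move=> i im; have := chain i m.-1; have := chain 0 i; lia.
Qed.

Section Occurrence.

Variables s t : seq nat.
Hypotheses (ps : is_perm s) (size_t : size t = size s).
Hypothesis same_pattern : forall i j, i < size s -> j < size s ->
  (nth 0 s i < nth 0 s j) = (nth 0 t i < nth 0 t j).

(* [y |-> s_(index y t)] is increasing on [L] and onto [1..size s], so it maps [L] to
   [iota 1 (size s)]. *)
Lemma occurrence_letter L : uniq t -> sorted ltn L -> L =i t -> t = map (letter L) s.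
Proof.
move=> t_uniq L_sorted L_t; have L_uniq := sorted_uniq ltn_trans ltnn L_sorted.
have sL : size L = size s by rewrite -size_t; apply/perm_size/uniq_perm.
pose chi y := nth 0 s (index y t).
have chiL : map chi L = iota 1 (size s).
  apply: (irr_sorted_eq ltn_trans ltnn).
  - rewrite sorted_map; apply: (sub_in_sorted _ (allss L) L_sorted) => y z.
    rewrite !L_t => yt zt.
    by rewrite /relpre /= /chi same_pattern ?nth_index //; rewrite -size_t index_mem.
  - exact: iota_ltn_sorted.
  - move=> z; rewrite mem_iota add1n ltnS -(mem_is_perm _ ps).
    apply/mapP/idP => [[y yL ->]|zs]; first by rewrite mem_nth // -size_t index_mem -L_t.
    exists (nth 0 t (index z s)); first by rewrite L_t mem_nth // size_t index_mem.
    by rewrite /chi index_uniq ?nth_index // size_t index_mem.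
apply: (@eq_from_nth _ 0); rewrite ?size_map ?size_t // => i i_s.
have jL : index (nth 0 t i) L < size s by rewrite -sL index_mem L_t mem_nth ?size_t.
have : chi (nth 0 L (index (nth 0 t i) L)) = (index (nth 0 t i) L).+1.
  by rewrite -(nth_map 0 0) ?sL // chiL nth_iota.
rewrite nth_index ?L_t ?mem_nth ?size_t // /chi index_uniq ?size_t // => s_i.
by rewrite (nth_map 0) // s_i /letter /= nth_index // L_t mem_nth ?size_t.
Qed.

Variable p : seq nat.
Hypotheses (pp : is_perm p) (tp : subseq t p).

(* Along [t] the descent count of [p] rises at least at every descent of [s]; as both end at
   [des s = des p], they agree everywhere. *)
Lemma desc_before_occurrence : des s = des p ->
  forall i, i < size s -> desc_before p (index (nth 0 t i) p) = desc_before s i.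
Proof.
move=> eq_des; have s_gt0 : 0 < size s by case/andP: ps.
have pos_ltn i j : i < j -> j < size s -> index (nth 0 t i) p < index (nth 0 t j) p.
  by move=> ij js; apply: subseq_index_ltn (is_perm_uniq pp) tp ij _; rewrite size_t.
have t_p i : i < size s -> nth 0 t i \in p.
  by move=> i_s; apply/(mem_subseq tp)/mem_nth; rewrite size_t.
apply: squeeze_increments => // [|j jS].
  by rewrite desc_before_last // eq_des desE; apply/leq_desc_before/index_size.
have lt_pos := pos_ltn j j.+1 (ltnSn j) jS.
have := leq_desc_before p (ltnW lt_pos); rewrite desc_beforeS.
case: (boolP (is_descent s j)) => [|_]; last by rewrite addn0; lia.
have j_s := ltnW jS.
rewrite /is_descent jS /= same_pattern // => t_desc _.
have := sorted_ltn_index (lex_by_trans ltn_trans) (sorted_lex_dval pp) _ _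
  (t_p j j_s) (t_p j.+1 jS) lt_pos.
by rewrite /lex_by /= !dvalE ltnS eqSS; lia.
Qed.

End Occurrence.

Lemma pat_le_subseq_fmap s p : is_perm s -> is_perm p -> des s = des p ->
  pat_le s p -> subseq (fmap s) (fmap p).
Proof.
move=> ps pp eq_des [t [tp size_t same_pattern]].
have t_uniq : uniq t := subseq_uniq tp (is_perm_uniq pp).
set L := filter (mem t) (iota 1 (size p)).
have L_t : L =i t.
  move=> x; rewrite mem_filter mem_iota add1n ltnS -(mem_is_perm _ pp) andb_idr //.
  exact/mem_subseq.
have L_sorted : sorted ltn L := sorted_filter ltn_trans _ (iota_ltn_sorted 1 _).
have sL : size L = size s.
  by rewrite -size_t; apply/perm_size/uniq_perm; rewrite ?filter_uniq ?iota_uniq.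
have t_L := occurrence_letter ps size_t same_pattern t_uniq L_sorted L_t.
have desc_t := desc_before_occurrence ps size_t same_pattern pp tp eq_des.
suff -> : fmap s = map (dval p) L by apply/map_subseq/filter_subseq.
apply/(fmap_eq_map_letter _ sL) => x; rewrite mem_iota add1n ltnS -(mem_is_perm _ ps) => xs.
have i_s : index x s < size s by rewrite index_mem.
have := desc_t _ i_s; rewrite t_L (nth_map 0) // nth_index // => eq_desc.
by rewrite /= !dvalE eq_desc.
Qed.

Lemma subseq_fmap_pat_le s p : is_perm s -> is_perm p ->
  subseq (fmap s) (fmap p) -> pat_le s p.
Proof.
move=> ps pp /subseqP[m _ fs_eq].
set L := mask m (iota 1 (size p)).
have L_sorted : sorted ltn L := subseq_sorted ltn_trans (mask_subseq m _) (iota_ltn_sorted 1 _).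
have L_p x : x \in L -> x \in p.
  by move/mem_mask; rewrite mem_iota (mem_is_perm _ pp) add1n ltnS.
have fsL : fmap s = map (dval p) L by rewrite fs_eq map_mask.
have sL : size L = size s by rewrite -(size_map (dval p)) -fsL size_fmap.
have d_letter := iffLR (fmap_eq_map_letter p sL) fsL.
have s_range x : x \in s -> 0 < x <= size L by rewrite sL mem_is_perm.
have s_iota x : x \in s -> x \in iota 1 (size s) by rewrite mem_iota add1n ltnS -sL => /s_range.
set t := map (letter L) s.
have t_L x : (x \in t) = (x \in L).
  apply/mapP/idP => [[y /s_range/andP[y_gt0 yL] ->]|xL].
    by rewrite /letter mem_nth // prednK.
  exists (index x L).+1; last by rewrite /letter nth_index.
  by rewrite mem_is_perm // -sL /= index_mem.
exists t; split; last first.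
- by move=> i j i_s j_s; rewrite !(nth_map 0) // letter_ltnE // s_range // mem_nth.
- by rewrite size_map.
have -> : t = filter (mem L) p.
  apply: (irr_sorted_eq (lex_by_trans ltn_trans) (@lex_by_irr (dval p))).
  - rewrite sorted_map; apply: (sub_in_sorted _ (allss s) (sorted_lex_dval ps)) => a b a_s b_s.
    rewrite /relpre /lex_by /= !d_letter ?s_iota //=.
    by rewrite letter_ltnE ?s_range.
  - exact/sorted_filter/sorted_lex_dval/pp/lex_by_trans/ltn_trans.
  - by move=> x; rewrite t_L mem_filter andb_idr //; apply: L_p.
exact: filter_subseq.
Qed.

Theorem mainTheorem3 (k : nat) :
  [/\ (forall pi, is_perm pi -> des pi = k -> inAhat k.+1 (fmap pi)),
      (forall sigma pi, is_perm sigma -> des sigma = k ->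
                        is_perm pi -> des pi = k ->
                        fmap sigma = fmap pi -> sigma = pi),
      (forall w, inAhat k.+1 w ->
                 exists pi, [/\ is_perm pi, des pi = k & fmap pi = w])
    & (forall sigma pi, is_perm sigma -> des sigma = k ->
                        is_perm pi -> des pi = k ->
                        (pat_le sigma pi <-> subseq (fmap sigma) (fmap pi)))].
Proof.
split=> [pi pp <-|sigma pi ps _ pp _|w w_in|sigma pi ps ks pp kp].
- exact: fmap_inAhat.
- exact: fmap_inj.
- exists (perm_of_word w); split.
  + exact: is_perm_perm_of_word w_in.
  + exact: des_perm_of_word w_in.
  + exact: fmap_perm_of_word w_in.
- split; last exact: subseq_fmap_pat_le.
  by apply: pat_le_subseq_fmap; rewrite ?ks.
Qed.
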